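(* Let $\phi$ be an $N$-affine equivariant additive integrator map satisfying the consistency condition $\phi(hf^{[1]},\ldots,hf^{[N]})=hf+o(h)$ as $h\to0$, where $f=f^{[1]}+\cdots+f^{[N]}$. If $f^{[\nu]}$ is a constant vector field for every $\nu=1,\ldots,N$, then $\phi(f^{[1]},\ldots,f^{[N]})=f$.
   Context: All spaces are real Banach spaces; $\mathfrak X(Y)$ denotes smooth vector fields on $Y$. For fixed $N$, an additive integrator map $\phi$ is a collection of smooth maps $\phi_Y\colon\mathfrak X(Y)^N\to\mathfrak X(Y)$, one per Banach space $Y$. For Gâteaux differentiable $\chi$, $f\sim_\chi g$ means $\chi'(y)f(y)=g(\chi(y))$ for all $y$. $\phi$ is $N$-affine equivariant if for every affine map $A$ between Banach spaces, $f^{[\nu]}\sim_A g^{[\nu]}$ for all $\nu$ implies $\phi(f^{[1]},\ldots,f^{[N]})\sim_A\phi(g^{[1]},\ldots,g^{[N]})$. *)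

From HB Require Import structures.
From mathcomp Require Import all_boot all_order all_algebra.
From mathcomp Require Import all_classical all_reals all_analysis.
Set Implicit Arguments. Unset Strict Implicit. Unset Printing Implicit Defensive.
Import Order.TTheory GRing.Theory Num.Theory.
Import numFieldNormedType.Exports.
Local Open Scope ring_scope.
Local Open Scope classical_set_scope.

(* Smoothness (C^oo) of a map f : X -> Y between real normed spaces, in the
   Michal-Bastiani sense: f is C^0 if continuous; C^(k+1) if all directional
   derivatives  df(x,v) = lim_{t->0} (f(x+tv)-f(x))/t  exist and the map
   (x,v) |-> df(x,v) on X x X is C^k.  On Banach spaces this coincides with
   Frechet C^oo. *)
Fixpoint Ck {R : realType} (Y : normedModType R) (k : nat)
  : forall X : normedModType R, (X -> Y) -> Prop :=
  match k with
  | 0%N => fun X f => continuous f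
  | k'.+1 => fun X f =>
      (forall x v : X, derivable f x v) /\
      @Ck R Y k' (X * X)%type (fun p : X * X => 'D_p.2 f p.1)
  end.

Definition smooth {R : realType} (X Y : normedModType R) (f : X -> Y) : Prop :=
  forall k : nat, @Ck R Y k X f.

Definition affine_map {R : realType} (Y1 Y2 : normedModType R) (A : Y1 -> Y2)
  : Prop :=
  continuous A /\
  exists (L : {linear Y1 -> Y2}) (b : Y2), forall x, A x = L x + b.

Definition related {R : realType} (Y1 Y2 : normedModType R) (chi : Y1 -> Y2)
  (f : Y1 -> Y1) (g : Y2 -> Y2) : Prop :=
  forall y, is_derive y (f y) chi (g (chi y)).

(* An additive integrator map: one map phi_Y : X(Y)^N -> X(Y) per real Banach
   space Y (vector fields represented as functions Y -> Y; only values on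
   smooth inputs are constrained). *)
Definition integrator_map (R : realType) (N : nat) :=
  forall Y : completeNormedModType R, ('I_N -> Y -> Y) -> Y -> Y.

Definition maps_smooth {R : realType} {N : nat} (phi : integrator_map R N) :=
  forall (Y : completeNormedModType R) (fs : 'I_N -> Y -> Y),
    (forall i, smooth (fs i)) -> smooth (phi Y fs).

Definition affine_equivariant {R : realType} {N : nat}
  (phi : integrator_map R N) : Prop :=
  forall (Y1 Y2 : completeNormedModType R) (A : Y1 -> Y2),
    affine_map A ->
    forall (fs : 'I_N -> Y1 -> Y1) (gs : 'I_N -> Y2 -> Y2),
      (forall i, smooth (fs i)) -> (forall i, smooth (gs i)) ->
      (forall i, related A (fs i) (gs i)) ->
      related A (phi Y1 fs) (phi Y2 gs).

Definition consistent {R : realType} {N : nat} (phi : integrator_map R N)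
  : Prop :=
  forall (Y : completeNormedModType R) (fs : 'I_N -> Y -> Y),
    (forall i, smooth (fs i)) ->
    forall y : Y,
      (fun h : R => phi Y (fun i => fun z => h *: fs i z) y
                    - h *: (\sum_(i < N) fs i y))
        =o_ ((0%R : R)^') (fun h : R => h).

From HB Require Import structures.
From mathcomp Require Import all_boot all_order all_algebra.
From mathcomp Require Import all_classical all_reals all_analysis.
Import Order.TTheory GRing.Theory Num.Theory.
Import numFieldNormedType.Exports.
Local Open Scope ring_scope.
Local Open Scope classical_set_scope.

(* For constant fields c_i and any point y, the homothety z |-> h (z - y) + y
   relates c_i to h c_i and fixes y, so equivariance forces
   phi(h c_1, ..., h c_N)(y) = h phi(c_1, ..., c_N)(y) for every h (h = 0
   included).  The consistency condition then says h (phi(c)(y) - sum_i c_i)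
   = o(h), which is only possible if phi(c)(y) = sum_i c_i. *)

Lemma Ck_cst (R : realType) (Y : normedModType R) (k : nat) :
  forall (X : normedModType R) (c : Y), @Ck R Y k X (fun _ : X => c).
Proof.
elim: k => [|k IH] X c /=; first by move=> x; exact: cvg_cst.
split; first by move=> x v; exact: derivable_cst.
have -> : (fun p : X * X => 'D_p.2 (fun _ : X => c) p.1) = fun _ => 0.
  by apply: funext => p; exact: derive_cst.
exact: IH.
Qed.

Lemma smooth_cst (R : realType) (X Y : normedModType R) (c : Y) :
  smooth (fun _ : X => c).
Proof. by move=> k; exact: Ck_cst. Qed.

Section Homothety.
Context {R : realType} {V : normedModType R} (y : V) (h : R).

Definition homothety (z : V) : V := h *: (z - y) + y.

Lemma homothety_center : homothety y = y.
Proof. by rewrite /homothety subrr scaler0 add0r. Qed.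

Lemma is_derive_homothety (z v : V) : is_derive z v homothety (h *: v).
Proof.
have Dsub : is_derive z v (fun z : V => z - y) (v - 0).
  exact: (@is_deriveB _ _ _ id (cst y)).
have := is_deriveD (is_deriveZ h Dsub) (is_derive_cst y z v).
by rewrite subr0 addr0.
Qed.

Lemma affine_homothety : affine_map homothety.
Proof.
split.
  move=> z; apply: cvgD; last exact: cvg_cst.
  by apply: cvgZ; [exact: cvg_cst | apply: cvgB; [exact: cvg_id | exact: cvg_cst]].
exists ( *:%R h : {linear V -> V}), (y - h *: y) => x.
by rewrite /homothety /= scalerBr -addrA [- _ + y]addrC.
Qed.

End Homothety.

Lemma scaler_littleo_eq0 (R : realType) (V : normedModType R) (v : V) :
  (fun t : R => t *: v) =o_ ((0%R : R)^') (fun t : R => t) -> v = 0.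
Proof.
move=> /eqoP small; apply/eqP; rewrite -normr_le0.
apply/ler_addgt0Pr => e e0; rewrite add0r.
near (0%R : R)^' => t.
have t_neq0 : t != 0 by near: t; exact: nbhs_dnbhs_neq.
have : `|t *: v| <= e * `|t| by near: t; exact: small.
by rewrite normrZ mulrC ler_pM2r // normr_gt0.
Unshelve. all: by end_near.
Qed.

Lemma equivariant_scale_cst {R : realType} {N : nat} {phi : integrator_map R N}
    {Y : completeNormedModType R} {fs : 'I_N -> Y -> Y} :
  affine_equivariant phi ->
  (forall i, exists c : Y, fs i = fun _ => c) ->
  forall (h : R) (y : Y), phi Y (fun i z => h *: fs i z) y = h *: phi Y fs y.
Proof.
move=> equiv fs_cst h y.
have fs_smooth i : smooth (fs i) by have [c ->] := fs_cst i; exact: smooth_cst.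
have hfs_smooth i : smooth (fun z => h *: fs i z).
  by have [c ->] := fs_cst i; exact: smooth_cst.
have rel i : related (homothety y h) (fs i) (fun z => h *: fs i z).
  by move=> z; have [c ->] := fs_cst i; exact: is_derive_homothety.
have := equiv Y Y _ (affine_homothety y h) fs _ fs_smooth hfs_smooth rel y.
rewrite homothety_center => /(@derive_val _ _ _ _ _ _ _) <-.
exact: @derive_val _ _ _ _ _ _ _ (is_derive_homothety _ _ _ _).
Qed.

Theorem lemma4p8 (R : realType) (N : nat) (phi : integrator_map R N) :
  maps_smooth phi ->
  affine_equivariant phi ->
  consistent phi ->
  forall (Y : completeNormedModType R) (fs : 'I_N -> Y -> Y),
    (forall i, smooth (fs i)) ->
    (forall i, exists c : Y, fs i = fun _ => c) ->
    phi Y fs = fun y => \sum_(i < N) fs i y.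
Proof.
move=> _ equiv consist Y fs fs_smooth fs_cst; apply: funext => y.
have := consist Y fs fs_smooth y.
set S := \sum_(i < N) fs i y.
have -> : (fun h : R => phi Y (fun i z => h *: fs i z) y - h *: S)
          = fun h => h *: (phi Y fs y - S).
  by apply: funext => h; rewrite (equivariant_scale_cst equiv fs_cst) scalerBr.
by move=> /scaler_littleo_eq0 /eqP; rewrite subr_eq0 => /eqP.
Qed.
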